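(* The functional $\delta$ defines a finite metric on $\mathrm{Conv}_{\mathrm{coe}}(\mathbb{R}^n)$. Furthermore, $\delta(u,v)=\delta(u(\cdot-x_0)+t_0,\,v(\cdot-x_0)+t_0)$ for every $u,v\in\mathrm{Conv}_{\mathrm{coe}}(\mathbb{R}^n)$, $x_0\in\mathbb{R}^n$ and $t_0\in\mathbb{R}$.
   Context: $\mathrm{Conv}_{\mathrm{coe}}(\mathbb{R}^n)$ is the set of proper, lower semicontinuous, convex, coercive functions $u:\mathbb{R}^n\to\mathbb{R}\cup\{+\infty\}$. $u^*(y)=\sup_x(\langle x,y\rangle-u(x))$ is the convex conjugate. For $\lambda>0$, $\|u^*-v^*\|_{\infty,\frac1\lambda B^n}=\sup_{|x|\le1/\lambda}|u^*(x)-v^*(x)|$. Define $\delta(u,v)=\inf\{\lambda>0:\|u^*-v^*\|_{\infty,\frac1\lambda B^n}\le\lambda\}$; equivalently $\delta(u,v)=\inf\{\lambda>0: u\ge v\,\Box\,(n_\lambda-\lambda)\text{ and }v\ge u\,\Box\,(n_\lambda-\lambda)\}$ where $n_\lambda(x)=|x|/\lambda$ and $\Box$ is infimal convolution. *)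

From HB Require Import structures.
From mathcomp Require Import all_boot all_order all_algebra.
From mathcomp Require Import boolp classical_sets reals constructive_ereal ereal.
Set Implicit Arguments. Unset Strict Implicit. Unset Printing Implicit Defensive.
Import Order.TTheory GRing.Theory Num.Theory.
Local Open Scope ring_scope.
Local Open Scope classical_set_scope.

Section Defs.
Variables (R : realType) (n : nat).

Definition dotv (x y : 'rV[R]_n) : R := \sum_(i < n) x ord0 i * y ord0 i.
Definition enorm (x : 'rV[R]_n) : R := Num.sqrt (dotv x x).

Definition proper_fun (u : 'rV[R]_n -> \bar R) : Prop :=
  (forall x, u x != -oo%E) /\ (exists x, u x != +oo%E).

Definition lsc (u : 'rV[R]_n -> \bar R) : Prop :=
  forall x (t : R), (t%:E < u x)%E ->
    exists2 e : R, 0 < e & forall y, enorm (y - x) < e -> (t%:E < u y)%E.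

Definition convex_fun (u : 'rV[R]_n -> \bar R) : Prop :=
  forall (x y : 'rV[R]_n) (l : R), 0 <= l -> l <= 1 ->
    (u (l *: x + (1 - l) *: y)%R <= l%:E * u x + (1 - l)%:E * u y)%E.

Definition coercive (u : 'rV[R]_n -> \bar R) : Prop :=
  forall M : R, exists r : R, forall x, r < enorm x -> (M%:E < u x)%E.

Definition Conv_coe (u : 'rV[R]_n -> \bar R) : Prop :=
  proper_fun u /\ lsc u /\ convex_fun u /\ coercive u.

Definition conj_fun (u : 'rV[R]_n -> \bar R) (y : 'rV[R]_n) : \bar R :=
  ereal_sup [set ((dotv x y)%:E - u x)%E | x in [set: 'rV[R]_n]].

(* ||u^* - v^*||_{oo, (1/l) B^n} <= l, with values in (-oo,+oo]
   (points where both conjugates are +oo contribute 0) *)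
Definition delta_cond (u v : 'rV[R]_n -> \bar R) (l : R) : Prop :=
  forall y, enorm y <= l^-1 ->
    (conj_fun u y <= conj_fun v y + l%:E)%E /\
    (conj_fun v y <= conj_fun u y + l%:E)%E.

Definition delta (u v : 'rV[R]_n -> \bar R) : R :=
  inf [set l : R | 0 < l /\ delta_cond u v l].

Definition transl (u : 'rV[R]_n -> \bar R) (x0 : 'rV[R]_n) (t0 : R) :=
  fun x : 'rV[R]_n => (u (x - x0)%R + t0%:E)%E.

End Defs.

(* Near 0 the conjugate of a function u of Conv_coe is finite and bounded:
   u lies above a cone (lower semicontinuity and convexity) and grows linearly
   (coercivity), so u x >= |x - x1| / rho - C and |u^*| is bounded on the ball
   of radius 1/rho.  Hence delta is finite, and symmetry and the triangle
   inequality come from those of the sup-distance of the conjugates.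
   If delta u v = 0, then v^* <= u^* + l on the ball of radius 1/l for every
   l > 0; this is incompatible with v x0 < u x0 as soon as u has an affine
   minorant <., y> - r exceeding v x0 at x0.  Such minorants exist: the
   regularisations inf_z (u z + k |x - z|) are finite and convex, exceed any
   t < u x0 at x0 for k large, and a subgradient of them at x0 is the
   slope y.
   Finally (u (. - x0) + t0)^* = u^* + <x0, .> - t0 and the affine term
   cancels in delta. *)

From HB Require Import structures.
From mathcomp Require Import all_boot all_order all_algebra.
From mathcomp Require Import boolp classical_sets reals constructive_ereal ereal.
From mathcomp Require Import ring lra.
Import Order.TTheory GRing.Theory Num.Theory.
Local Open Scope ring_scope.
Local Open Scope classical_set_scope.
Set Implicit Arguments. Unset Strict Implicit. Unset Printing Implicit Defensive.

Section Euclidean.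
Variables (R : realType) (n : nat).
Implicit Types x y z : 'rV[R]_n.

Lemma dotvC x y : dotv x y = dotv y x.
Proof. by apply: eq_bigr => i _; rewrite mulrC. Qed.

Lemma dotvDl x y z : dotv (x + y) z = dotv x z + dotv y z.
Proof. by rewrite /dotv -big_split; apply: eq_bigr => i _; rewrite !mxE mulrDl. Qed.

Lemma dotvZl (c : R) x y : dotv (c *: x) y = c * dotv x y.
Proof. by rewrite /dotv mulr_sumr; apply: eq_bigr => i _; rewrite !mxE mulrA. Qed.

Lemma dotvNl x y : dotv (- x) y = - dotv x y.
Proof. by rewrite -scaleN1r dotvZl mulN1r. Qed.

Lemma dotvBl x y z : dotv (x - y) z = dotv x z - dotv y z.
Proof. by rewrite dotvDl dotvNl. Qed.

Lemma dotvDr x y z : dotv x (y + z) = dotv x y + dotv x z.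
Proof. by rewrite dotvC dotvDl !(dotvC _ x). Qed.

Lemma dotvZr (c : R) x y : dotv x (c *: y) = c * dotv x y.
Proof. by rewrite dotvC dotvZl dotvC. Qed.

Lemma dotvBr x y z : dotv x (y - z) = dotv x y - dotv x z.
Proof. by rewrite dotvC dotvBl !(dotvC _ x). Qed.

Lemma dotv0l y : dotv 0 y = 0.
Proof. by rewrite -(scale0r 0) dotvZl mul0r. Qed.

Lemma dotv0r x : dotv x 0 = 0.
Proof. by rewrite dotvC dotv0l. Qed.

Lemma dotvv_ge0 x : 0 <= dotv x x.
Proof. by apply: sumr_ge0 => i _; rewrite -expr2 sqr_ge0. Qed.

Lemma dotvv_eq0 x : dotv x x = 0 -> x = 0.
Proof.
move=> /eqP; rewrite psumr_eq0 => [/allP x0|i _]; last by rewrite -expr2 sqr_ge0.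
apply/rowP => j; rewrite mxE.
by have := x0 j (mem_index_enum j); rewrite -expr2 sqrf_eq0 => /eqP.
Qed.

Lemma enorm_ge0 x : 0 <= enorm x.
Proof. exact: sqrtr_ge0. Qed.

Lemma enorm_sqr x : enorm x ^+ 2 = dotv x x.
Proof. by rewrite sqr_sqrtr // dotvv_ge0. Qed.

Lemma enorm0 : enorm (0 : 'rV[R]_n) = 0.
Proof. by rewrite /enorm dotv0l sqrtr0. Qed.

Lemma enormZ (c : R) x : enorm (c *: x) = `|c| * enorm x.
Proof.
rewrite /enorm dotvZl dotvZr mulrA -expr2 -real_normK ?num_real //.
by rewrite sqrtrM ?sqr_ge0 // sqrtr_sqr normr_id.
Qed.

Lemma enormN x : enorm (- x) = enorm x.
Proof. by rewrite -scaleN1r enormZ normrN1 mul1r. Qed.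

Lemma enormB x y : enorm (x - y) = enorm (y - x).
Proof. by rewrite -enormN opprB. Qed.

Lemma cauchy_schwarz x y : dotv x y ^+ 2 <= dotv x x * dotv y y.
Proof.
have [yy0|yy_neq0] := eqVneq (dotv y y) 0.
  by rewrite yy0 (dotvv_eq0 yy0) dotv0r expr0n /= mulr0.
have yy_gt0 : 0 < dotv y y by rewrite lt_def yy_neq0 dotvv_ge0.
(* expand [0 <= |x - t y|^2] at the minimising [t = <x,y> / |y|^2] *)
pose t := dotv x y / dotv y y.
have := dotvv_ge0 (x - t *: y).
rewrite !(dotvBl, dotvBr, dotvZl, dotvZr) (dotvC y x).
have -> : dotv x x - t * dotv x y - t * (dotv x y - t * dotv y y)
        = (dotv x x * dotv y y - dotv x y ^+ 2) / dotv y y.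
  by rewrite /t; field.
by rewrite pmulr_lge0 ?invr_gt0 // subr_ge0.
Qed.

Lemma dotv_le_enorm x y : dotv x y <= enorm x * enorm y.
Proof.
apply: le_trans (ler_norm _) _.
rewrite -(ler_pXn2r (n := 2)) ?nnegrE ?mulr_ge0 ?enorm_ge0 //.
by rewrite exprMn !enorm_sqr real_normK ?num_real // cauchy_schwarz.
Qed.

Lemma ler_enormD x y : enorm (x + y) <= enorm x + enorm y.
Proof.
rewrite -(ler_pXn2r (n := 2)) ?nnegrE ?addr_ge0 ?enorm_ge0 //.
rewrite enorm_sqr !(dotvDl, dotvDr) sqrrD !enorm_sqr (dotvC y x).
by have := dotv_le_enorm x y; lra.
Qed.

Lemma ler_enorm_distD x y z : enorm (x - z) <= enorm (x - y) + enorm (y - z).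
Proof. by have := ler_enormD (x - y) (y - z); rewrite addrA subrK. Qed.

Lemma dotv_delta_mx (v : 'rV[R]_n) i : dotv v (delta_mx ord0 i) = v ord0 i.
Proof.
rewrite /dotv (bigD1 i) //= big1 ?addr0 => [|j /negbTE ji]; first by rewrite mxE !eqxx mulr1.
by rewrite mxE ji andbF mulr0.
Qed.

End Euclidean.

Section Subgradient.
Variables (R : realType) (n : nat) (g : 'rV[R]_n -> R) (x0 : 'rV[R]_n).
Hypothesis g_convex : forall x x' (l : R), 0 < l -> l < 1 ->
  g (l *: x + (1 - l) *: x') <= l * g x + (1 - l) * g x'.

Definition supported_below k (v : 'rV[R]_n) :=
  forall j : 'I_n, (k <= j)%N -> v ord0 j = 0.

Definition subgradient_on k y :=
  forall v, supported_below k v -> g x0 + dotv v y <= g (x0 + v).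

Lemma supported_below_comb k (v w : 'rV[R]_n) (a b : R) :
  supported_below k v -> supported_below k w -> supported_below k (a *: v + b *: w).
Proof. by move=> v0 w0 j kj; rewrite !mxE v0 // w0 // !mulr0 addr0. Qed.

Lemma supported_belowS_drop k (i : 'I_n) v : val i = k ->
  supported_below k.+1 v -> supported_below k (v - v ord0 i *: delta_mx ord0 i).
Proof.
move=> <- vk1 j kj; rewrite !mxE eqxx /=.
have [->|ji] := eqVneq j i; first by rewrite mulr1 subrr.
rewrite mulr0 subr0 vk1 // ltn_neqAle kj andbT eq_sym.
by apply: contra ji => /eqP jk; apply/eqP/val_inj.
Qed.

Lemma difference_quotient_le k y e v1 v2 (s1 s2 : R) : subgradient_on k y ->
  supported_below k v1 -> supported_below k v2 -> 0 < s1 -> 0 < s2 ->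
  (g x0 + dotv v2 y - g (x0 + v2 - s2 *: e)) / s2
    <= (g (x0 + v1 + s1 *: e) - g x0 - dotv v1 y) / s1.
Proof.
move=> y_sub v1k v2k s1_gt0 s2_gt0.
have s12_gt0 : 0 < s1 + s2 by rewrite addr_gt0.
pose l := s2 / (s1 + s2).
have l_gt0 : 0 < l by rewrite divr_gt0.
have l_lt1 : l < 1 by rewrite ltr_pdivrMr // mul1r ltrDr.
pose w := l *: v1 + (1 - l) *: v2.
have wE : l *: (x0 + v1 + s1 *: e) + (1 - l) *: (x0 + v2 - s2 *: e) = x0 + w.
  by apply/rowP => j; rewrite !mxE /l; field; rewrite gt_eqF.
have := y_sub w (supported_below_comb _ _ v1k v2k).
have := g_convex (x0 + v1 + s1 *: e) (x0 + v2 - s2 *: e) l_gt0 l_lt1.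
rewrite wE /w dotvDl !dotvZl.
set a := g (x0 + v1 + s1 *: e); set b := g (x0 + v2 - s2 *: e).
move=> gw_le gw_ge.
have : (s2 * (g x0 + dotv v1 y - a) + s1 * (g x0 + dotv v2 y - b)) / (s1 + s2) <= 0.
  have -> : (s2 * (g x0 + dotv v1 y - a) + s1 * (g x0 + dotv v2 y - b)) / (s1 + s2)
          = g x0 + (l * dotv v1 y + (1 - l) * dotv v2 y) - (l * a + (1 - l) * b).
    by rewrite /l; field; rewrite gt_eqF.
  by rewrite subr_le0; apply: le_trans gw_le.
rewrite pmulr_lle0 ?invr_gt0 // => key.
by rewrite ler_pdivrMr // mulrAC ler_pdivlMr //; nra.
Qed.

Lemma subgradient_on_extend k y (kn : (k < n)%N) :
  supported_below k y -> subgradient_on k y ->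
  exists2 y', supported_below k.+1 y' & subgradient_on k.+1 y'.
Proof.
(* the new coordinate of the slope is squeezed between the left and the right
   difference quotients of g in the direction e_k, as for Hahn-Banach *)
move=> yk y_sub; pose i := Ordinal kn; pose e : 'rV[R]_n := delta_mx ord0 i.
pose left_slopes := [set c | exists v s, [/\ supported_below k v, 0 < s &
  c = (g x0 + dotv v y - g (x0 + v - s *: e)) / s]].
have zero_k : supported_below k 0 by move=> j _; rewrite mxE.
have right_ub v s : supported_below k v -> 0 < s ->
    ubound left_slopes ((g (x0 + v + s *: e) - g x0 - dotv v y) / s).
  move=> vk s_gt0; apply/ubP => _ [v' [s' [v'k s'_gt0 ->]]].
  exact: (difference_quotient_le e y_sub).
have left_sup : has_sup left_slopes.
  split; first by exists ((g x0 + dotv 0 y - g (x0 + 0 - 1 *: e)) / 1), 0, 1.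
  by exists ((g (x0 + 0 + 1 *: e) - g x0 - dotv 0 y) / 1); apply: right_ub.
pose c := sup left_slopes.
exists (y + c *: e).
  move=> j kj; have /negbTE ji : j != i by rewrite -val_eqE /= gtn_eqF.
  by rewrite !mxE yk ?(ltnW kj) // ji andbF mulr0 addr0.
move=> v /(supported_belowS_drop (erefl : val i = k)) wk; pose s := v ord0 i; pose w := v - s *: e.
have vE : v = w + s *: e by rewrite subrK.
have dotv_wy : dotv w y = dotv v y.
  by rewrite dotvBl dotvZl (dotvC e) dotv_delta_mx yk // mulr0 subr0.
have dotvE : dotv v (y + c *: e) = dotv w y + s * c.
  by rewrite dotv_wy dotvDr dotvZr dotv_delta_mx mulrC.
rewrite dotvE.
have [s_lt0|s_gt0|s0] := ltgtP s 0.
- have := sup_upper_bound left_sup (ex_intro _ w (ex_intro _ (- s) (And3 wk _ erefl))).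
  rewrite oppr_gt0 => /(_ s_lt0).
  rewrite ler_pdivrMr ?oppr_gt0 // scaleNr opprK -(addrA x0) -vE -/c; nra.
- have := ge_sup left_sup.1 (right_ub w s wk s_gt0).
  rewrite ler_pdivlMr // -(addrA x0) -vE -/c; nra.
- have wv : w = v by rewrite /w s0 scale0r subr0.
  by rewrite s0 mul0r addr0 wv; apply: y_sub; rewrite -wv.
Qed.

Lemma convex_subgradient : exists y, forall x, g x0 + dotv (x - x0) y <= g x.
Proof.
suff subgradient_upto k : (k <= n)%N ->
    exists2 y, supported_below k y & subgradient_on k y.
  have [y _ y_sub] := subgradient_upto n (leqnn n).
  exists y => x; rewrite -[in g x](subrK x0 x) [_ + x0]addrC; apply: y_sub => j.
  by rewrite leqNgt ltn_ord.
elim: k => [_|k IHk kn].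
  exists 0 => [j _|v v0]; first by rewrite mxE.
  have -> : v = 0 by apply/rowP => j; rewrite mxE v0.
  by rewrite dotv0l !addr0.
by have [y] := IHk (ltnW kn); exact: subgradient_on_extend.
Qed.

End Subgradient.

Section ConvexMinorants.
Variables (R : realType) (n : nat) (u : 'rV[R]_n -> \bar R).
Implicit Types x y : 'rV[R]_n.

Lemma proper_fun_fin : proper_fun u -> exists x1 (a : R), u x1 = a%:E.
Proof.
move=> [u_gtNy [x1 ux1]]; exists x1; move: (u_gtNy x1) ux1.
by case: (u x1) => [a _ _| //|//]; exists a.
Qed.

Lemma convex_fun_segment x1 x (a b l : R) : convex_fun u ->
  u x1 = a%:E -> u x = b%:E -> 0 <= l -> l <= 1 ->
  (u (x1 + l *: (x - x1)) <= (a + l * (b - a))%:E)%E.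
Proof.
move=> u_cvx ux1 ux l0 l1.
have -> : x1 + l *: (x - x1) = l *: x + (1 - l) *: x1.
  by apply/rowP => j; rewrite !mxE; ring.
apply: le_trans (u_cvx x x1 l l0 l1) _.
by rewrite ux ux1 -!EFinM -EFinD lee_fin; lra.
Qed.

Lemma enorm_segment x1 x (l : R) : 0 <= l ->
  enorm (x1 + l *: (x - x1) - x1) = l * enorm (x - x1).
Proof. by move=> l0; rewrite addrAC subrr add0r enormZ ger0_norm. Qed.

Lemma lsc_convex_cone_minorant x1 (a : R) :
  proper_fun u -> lsc u -> convex_fun u -> u x1 = a%:E ->
  exists K B : R, 0 <= K /\ forall x, ((- B - K * enorm (x - x1))%:E <= u x)%E.
Proof.
move=> [u_gtNy _] u_lsc u_cvx ux1.
have [d d_gt0 near_x1] : exists2 d : R, 0 < d &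
    forall x, enorm (x - x1) < d -> ((a - 1)%:E < u x)%E.
  by apply: u_lsc; rewrite ux1 lte_fin; lra.
exists (2 / d), (1 - a); split => [|x]; first by rewrite divr_ge0 // ltW.
case ux: (u x) => [b| |]; [|exact: leey|by move: (u_gtNy x); rewrite ux].
set D := enorm (x - x1); rewrite lee_fin.
have D_ge0 : 0 <= D by exact: enorm_ge0.
have KD_ge0 : 0 <= 2 / d * D by rewrite mulr_ge0 // divr_ge0 // ltW.
have [D_lt_d|d_le_D] := ltP D d.
  by have := near_x1 x D_lt_d; rewrite ux lte_fin; lra.
have D_gt0 : 0 < D by apply: lt_le_trans d_le_D.
(* the point of [x1, x] at distance d/2 from x1 is in the lsc neighbourhood *)
pose l := d / (2 * D).
have l_gt0 : 0 < l by rewrite divr_gt0 // mulr_gt0.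
have l_le1 : l <= 1 by rewrite ler_pdivrMr ?mulr_gt0 // mul1r; lra.
have lD : l * D = d / 2 by rewrite /l; field; rewrite gt_eqF.
have := near_x1 (x1 + l *: (x - x1)); rewrite (enorm_segment _ _ (ltW l_gt0)) -/D.
move=> /(_ ltac:(nra)) /lt_le_trans /(_ (convex_fun_segment u_cvx ux1 ux (ltW l_gt0) l_le1)).
rewrite lte_fin => seg.
have lK : l * (2 / d * D) = 1 by rewrite /l; field; rewrite !gt_eqF.
nra.
Qed.

Lemma coercive_convex_growth x1 (a : R) :
  proper_fun u -> convex_fun u -> coercive u -> u x1 = a%:E ->
  exists2 rho : R, 0 < rho & forall x, rho <= enorm (x - x1) ->
    ((a + enorm (x - x1) / rho)%:E <= u x)%E.
Proof.
move=> [u_gtNy _] u_cvx u_coe ux1.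
have [r far] := u_coe (a + 1).
pose rho := `|r| + enorm x1 + 1.
have rho_gt0 : 0 < rho by rewrite /rho; have := enorm_ge0 x1; have := normr_ge0 r; lra.
exists rho => // x; set D := enorm (x - x1) => rho_le_D.
case ux: (u x) => [b| |]; [|exact: leey|by move: (u_gtNy x); rewrite ux].
rewrite lee_fin.
have D_gt0 : 0 < D by apply: lt_le_trans rho_le_D.
(* the point of [x1, x] at distance rho from x1 lies where u > a + 1 *)
pose l := rho / D.
have l_gt0 : 0 < l by rewrite divr_gt0.
have l_le1 : l <= 1 by rewrite ler_pdivrMr // mul1r.
set z := x1 + l *: (x - x1).
have z_far : r < enorm z.
  have := ler_enormD z (- x1); rewrite enormN (enorm_segment _ _ (ltW l_gt0)).
  rewrite /l -/D divfK ?gt_eqF //; have := ler_norm r; rewrite /rho; lra.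
have := lt_le_trans (far _ z_far) (convex_fun_segment u_cvx ux1 ux (ltW l_gt0) l_le1).
rewrite lte_fin => seg.
have lD : l * (D / rho) = 1 by rewrite /l; field; rewrite !gt_eqF.
have : 0 < D / rho by rewrite divr_gt0.
nra.
Qed.

End ConvexMinorants.

Section ConjugateBounds.
Variables (R : realType) (n : nat).
Implicit Types (u : 'rV[R]_n -> \bar R) (x y : 'rV[R]_n).

Lemma le_conj_fun u x y : ((dotv x y)%:E - u x <= conj_fun u y)%E.
Proof. by apply: ereal_sup_ubound; exists x. Qed.

Lemma Conv_coe_enorm_minorant u : Conv_coe u ->
  exists x1 (a C rho : R), [/\ u x1 = a%:E, 0 < rho &
    forall x, ((enorm (x - x1) / rho - C)%:E <= u x)%E].
Proof.
move=> [u_proper [u_lsc [u_cvx u_coe]]].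
have [x1 [a ux1]] := proper_fun_fin u_proper.
have [K [B [K_ge0 cone]]] := lsc_convex_cone_minorant u_proper u_lsc u_cvx ux1.
have [rho rho_gt0 growth] := coercive_convex_growth u_proper u_cvx u_coe ux1.
exists x1, a, (`|B| + K * rho + 1 + `|a|), rho; split => // x.
set D := enorm (x - x1).
have := ler_norm B; have := ler_norm (- a); rewrite normrN => aN Bn.
have Krho_ge0 := mulr_ge0 K_ge0 (ltW rho_gt0).
have [D_lt_rho|rho_le_D] := ltP D rho; last first.
  by apply: le_trans (growth _ rho_le_D); rewrite lee_fin -/D; have := normr_ge0 B; lra.
apply: le_trans (cone x); rewrite lee_fin -/D.
have : D / rho <= 1 by rewrite ler_pdivrMr // mul1r ltW.
have : K * D <= K * rho by rewrite ler_wpM2l // ltW.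
have := normr_ge0 a; lra.
Qed.

Lemma Conv_coe_conj_bounded u : Conv_coe u ->
  exists r M : R, 0 < r /\ forall y, enorm y <= r ->
    ((- M)%:E <= conj_fun u y /\ conj_fun u y <= M%:E)%E.
Proof.
move=> u_coe; have [x1 [a [C [rho [ux1 rho_gt0 minor]]]]] := Conv_coe_enorm_minorant u_coe.
exists rho^-1, (enorm x1 / rho + `|C| + `|a|); split => [|y y_le]; first by rewrite invr_gt0.
have dotv_le z : dotv z y <= enorm z / rho.
  by apply: le_trans (dotv_le_enorm z y) _; rewrite ler_wpM2l ?enorm_ge0.
split.
  apply: le_trans (le_conj_fun u x1 y); rewrite ux1 -EFinB lee_fin.
  have := dotv_le (- x1); rewrite dotvNl enormN.
  by have := ler_norm a; have := normr_ge0 C; lra.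
apply: ge_ereal_sup => _ [x _ <-].
case ux: (u x) => [b| |]; [|by rewrite leNye|by case: u_coe => -[/(_ x)]; rewrite ux].
have := minor x; rewrite ux -EFinB !lee_fin.
have := dotv_le (x - x1); have := dotv_le x1; rewrite dotvBl.
have := normr_ge0 a; have := ler_norm C; lra.
Qed.

End ConjugateBounds.

Lemma lb_le_inf_comb (R : realType) (A B : set R) (c l m : R) :
  A !=set0 -> B !=set0 -> 0 < l -> 0 < m ->
  (forall a b, A a -> B b -> c <= l * a + m * b) -> c <= l * inf A + m * inf B.
Proof.
move=> A0 B0 l_gt0 m_gt0 lb.
have infA_ge b : B b -> (c - m * b) / l <= inf A.
  move=> Bb; apply: lb_le_inf => // a Aa.
  by rewrite ler_pdivrMr // mulrC; have := lb a b Aa Bb; lra.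
have : (c - l * inf A) / m <= inf B.
  apply: lb_le_inf => // b Bb; rewrite ler_pdivrMr // mulrC.
  by have := infA_ge b Bb; rewrite ler_pdivrMr // mulrC; lra.
by rewrite ler_pdivrMr // mulrC; lra.
Qed.

Section LipschitzRegularization.
Variables (R : realType) (n : nat) (u : 'rV[R]_n -> \bar R).
Hypothesis u_gtNy : forall x, u x != -oo%E.
Variables (x1 : 'rV[R]_n) (K B : R).
Hypothesis K_ge0 : 0 <= K.
Hypothesis cone : forall x, ((- B - K * enorm (x - x1))%:E <= u x)%E.
Implicit Types (x y z : 'rV[R]_n) (k : R).

Definition fin_dom := [set z | u z != +oo%E].

Hypothesis x1_dom : fin_dom x1.

Definition lipschitz_reg k x := inf [set fine (u z) + k * enorm (x - z) | z in fin_dom].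

Lemma fin_domE z : fin_dom z -> u z = (fine (u z))%:E.
Proof. by move=> z_dom; rewrite fineK // fin_numE u_gtNy. Qed.

Lemma fin_dom_cone z : fin_dom z -> - B - K * enorm (z - x1) <= fine (u z).
Proof. by move=> z_dom; have := cone z; rewrite (fin_domE z_dom) lee_fin. Qed.

Lemma lipschitz_reg_bounded k x : K <= k ->
  has_lbound [set fine (u z) + k * enorm (x - z) | z in fin_dom].
Proof.
move=> K_le_k; exists (- B - K * enorm (x - x1)) => _ [z z_dom <-].
have := fin_dom_cone z_dom; have := ler_enorm_distD z x x1; rewrite (enormB z x).
have : K * enorm (x - z) <= k * enorm (x - z) by rewrite ler_wpM2r ?enorm_ge0.
move=> Kk dist cone_z.
have : K * enorm (z - x1) <= K * (enorm (x - z) + enorm (x - x1)) by rewrite ler_wpM2l.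
lra.
Qed.

Lemma lipschitz_reg_le k x : K <= k -> fin_dom x -> lipschitz_reg k x <= fine (u x).
Proof.
move=> K_le_k x_dom; have := ge_inf (lipschitz_reg_bounded x K_le_k).
move=> /(_ _ (ex_intro2 _ _ x x_dom erefl)).
by rewrite subrr enorm0 mulr0 addr0.
Qed.

Lemma lipschitz_reg_convex k : K <= k -> convex_fun u ->
  forall x x' (l : R), 0 < l -> l < 1 ->
  lipschitz_reg k (l *: x + (1 - l) *: x') <=
    l * lipschitz_reg k x + (1 - l) * lipschitz_reg k x'.
Proof.
move=> K_le_k u_cvx x x' l l_gt0 l_lt1.
have k_ge0 : 0 <= k by apply: le_trans K_le_k.
have reg_set0 x'' : [set fine (u z) + k * enorm (x'' - z) | z in fin_dom] !=set0.
  by exists (fine (u x1) + k * enorm (x'' - x1)), x1.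
apply: lb_le_inf_comb => //; first by rewrite subr_gt0.
move=> _ _ [z z_dom <-] [z' z'_dom <-].
set w := l *: z + (1 - l) *: z'.
have := u_cvx z z' l (ltW l_gt0) (ltW l_lt1).
rewrite (fin_domE z_dom) (fin_domE z'_dom) -!EFinM -EFinD => uw_le.
have w_dom : fin_dom w by apply: contraTneq uw_le => ->.
rewrite (fin_domE w_dom) lee_fin in uw_le.
have : enorm (l *: x + (1 - l) *: x' - w) <= l * enorm (x - z) + (1 - l) * enorm (x' - z').
  have -> : l *: x + (1 - l) *: x' - w = l *: (x - z) + (1 - l) *: (x' - z').
    by apply/rowP => j; rewrite !mxE; ring.
  apply: le_trans (ler_enormD _ _) _.
  by rewrite !enormZ !ger0_norm //; lra.
move=> /(ler_wpM2l k_ge0).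
have := ge_inf (lipschitz_reg_bounded (l *: x + (1 - l) *: x') K_le_k).
move=> /(_ _ (ex_intro2 _ _ w w_dom erefl)).
rewrite /lipschitz_reg; lra.
Qed.

Lemma lsc_lipschitz_reg_ge x0 (t : R) : lsc u -> (t%:E < u x0)%E ->
  exists2 k, K <= k & t <= lipschitz_reg k x0.
Proof.
move=> u_lsc /u_lsc [eps eps_gt0 near_x0].
set D := enorm (x0 - x1); set gap := `|t + B + K * D| + 1.
(* outside the eps-ball around x0 the slope [k - K = gap / eps] beats the cone *)
have gap_gt : t + B + K * D < gap by have := ler_norm (t + B + K * D); rewrite /gap; lra.
have gap_gt0 : 0 < gap by rewrite /gap ltr_wpDl.
have slope_ge0 : 0 <= gap / eps by rewrite divr_ge0 ?ltW.
exists (K + gap / eps); first by rewrite lerDl.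
have k_ge0 : 0 <= K + gap / eps by rewrite addr_ge0.
apply: lb_le_inf; first by exists (fine (u x1) + (K + gap / eps) * enorm (x0 - x1)), x1.
move=> _ [z z_dom <-]; rewrite (enormB x0 z).
have [z_near|z_far] := ltP (enorm (z - x0)) eps.
  have := near_x0 z z_near; rewrite (fin_domE z_dom) lte_fin.
  by have := mulr_ge0 k_ge0 (enorm_ge0 (z - x0)); lra.
have := fin_dom_cone z_dom; have := ler_enorm_distD z x0 x1; rewrite -/D => dist cone_z.
have : K * enorm (z - x1) <= K * (enorm (z - x0) + D) by rewrite ler_wpM2l.
have : gap <= gap / eps * enorm (z - x0).
  by rewrite mulrAC ler_pdivlMr // ler_wpM2l // ltW.
lra.
Qed.

End LipschitzRegularization.

Lemma EFin_lt_dense (R : realType) (t : R) (e : \bar R) :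
  (t%:E < e)%E -> exists2 t' : R, t < t' & (t'%:E < e)%E.
Proof.
case: e => [b| _|//]; last by exists (t + 1)%R; [lra | exact: ltey].
by rewrite lte_fin => t_lt; exists ((t + b) / 2)%R; rewrite ?lte_fin; lra.
Qed.

Lemma lsc_convex_affine_minorant (R : realType) (n : nat) (u : 'rV[R]_n -> \bar R)
    x0 (t : R) :
  proper_fun u -> lsc u -> convex_fun u -> (t%:E < u x0)%E ->
  exists y (r : R), (conj_fun u y <= r%:E)%E /\ t < dotv x0 y - r.
Proof.
move=> u_proper u_lsc u_cvx /EFin_lt_dense [t' t_lt_t' t'_lt].
have u_gtNy := u_proper.1.
have [x1 [a ux1]] := proper_fun_fin u_proper.
have [K [B [K_ge0 cone]]] := lsc_convex_cone_minorant u_proper u_lsc u_cvx ux1.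
have x1_dom : fin_dom u x1 by rewrite /fin_dom /= ux1.
have [k K_le_k t'_le] := lsc_lipschitz_reg_ge u_gtNy K_ge0 cone x1_dom u_lsc t'_lt.
have reg_convex := lipschitz_reg_convex u_gtNy K_ge0 cone x1_dom K_le_k u_cvx.
have [y y_sub] := convex_subgradient x0 reg_convex.
exists y, (dotv x0 y - lipschitz_reg u k x0); split; last by lra.
apply: ge_ereal_sup => _ [x _ <-].
case ux: (u x) => [b| |]; [|by rewrite leNye|by move: (u_gtNy x); rewrite ux].
have x_dom : fin_dom u x by rewrite /fin_dom /= ux.
have := lipschitz_reg_le u_gtNy K_ge0 cone K_le_k x_dom; rewrite ux /=.
have := y_sub x; rewrite dotvBl -EFinB lee_fin; lra.
Qed.

Section Delta.
Variables (R : realType) (n : nat).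
Implicit Types (u v w : 'rV[R]_n -> \bar R) (x y : 'rV[R]_n).

Definition delta_set u v := [set l : R | 0 < l /\ delta_cond u v l].

Lemma delta_set_lbound u v : lbound (delta_set u v) 0.
Proof. by move=> l [l_gt0 _]; exact: ltW. Qed.

Lemma delta_set_has_lbound u v : has_lbound (delta_set u v).
Proof. by exists 0; exact: delta_set_lbound. Qed.

Lemma delta_cond_mono u v (a b : R) : 0 < a -> a <= b ->
  delta_cond u v a -> delta_cond u v b.
Proof.
move=> a_gt0 a_le_b cond y y_le.
have b_gt0 : 0 < b by apply: lt_le_trans a_le_b.
have /cond[uv vu] : enorm y <= a^-1.
  by apply: le_trans y_le _; rewrite lef_pV2 ?posrE.
by split; [apply: le_trans uv _ | apply: le_trans vu _]; rewrite leeD2l ?lee_fin.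
Qed.

Lemma delta_condC u v l : delta_cond u v l -> delta_cond v u l.
Proof. by move=> cond y /cond[]. Qed.

Lemma delta_condxx u l : 0 <= l -> delta_cond u u l.
Proof. by move=> l_ge0 y _; split; rewrite leeDl ?lee_fin. Qed.

Lemma delta_condD u v w (a b : R) : 0 < a -> 0 < b ->
  delta_cond u v a -> delta_cond v w b -> delta_cond u w (a + b).
Proof.
move=> a_gt0 b_gt0 uv vw y y_le.
have /uv[uv1 uv2] : enorm y <= a^-1.
  by apply: le_trans y_le _; rewrite lef_pV2 ?posrE ?addr_gt0 // lerDl ltW.
have /vw[vw1 vw2] : enorm y <= b^-1.
  by apply: le_trans y_le _; rewrite lef_pV2 ?posrE ?addr_gt0 // lerDr ltW.
rewrite EFinD; split.
  by apply: le_trans uv1 _; rewrite (addeC a%:E) addeA leeD2r.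
by apply: le_trans vw2 _; rewrite addeA leeD2r.
Qed.

Lemma exists_delta_cond u v : Conv_coe u -> Conv_coe v ->
  exists l : R, 0 < l /\ delta_cond u v l.
Proof.
move=> /Conv_coe_conj_bounded[ru [Mu [ru_gt0 u_bd]]].
move=> /Conv_coe_conj_bounded[rv [Mv [rv_gt0 v_bd]]].
pose l := Num.max (Num.max ru^-1 rv^-1) (Mu + Mv).
have ru_l : ru^-1 <= l by rewrite !le_max lexx.
have rv_l : rv^-1 <= l by rewrite !le_max lexx orbT.
have M_l : Mu + Mv <= l by rewrite !le_max lexx orbT.
have l_gt0 : 0 < l by apply: lt_le_trans ru_l; rewrite invr_gt0.
exists l; split => // y y_le.
have /u_bd[u_lb u_ub] : enorm y <= ru.
  by apply: le_trans y_le _; rewrite -[ru]invrK lef_pV2 ?posrE ?invr_gt0.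
have /v_bd[v_lb v_ub] : enorm y <= rv.
  by apply: le_trans y_le _; rewrite -[rv]invrK lef_pV2 ?posrE ?invr_gt0.
split.
  by apply: le_trans u_ub (le_trans _ (leeD2r l%:E v_lb)); rewrite -EFinD lee_fin; lra.
by apply: le_trans v_ub (le_trans _ (leeD2r l%:E u_lb)); rewrite -EFinD lee_fin; lra.
Qed.

Lemma delta_ge0 u v : Conv_coe u -> Conv_coe v -> 0 <= delta u v.
Proof.
move=> u_coe v_coe; apply: lb_le_inf; last exact: delta_set_lbound.
by have [l l_cond] := exists_delta_cond u_coe v_coe; exists l.
Qed.

Lemma delta_eq0_delta_cond u v : Conv_coe u -> Conv_coe v -> delta u v = 0 ->
  forall l, 0 < l -> delta_cond u v l.
Proof.
move=> u_coe v_coe delta0 l l_gt0.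
have [l0 l0_cond] := exists_delta_cond u_coe v_coe.
have delta_inf : has_inf (delta_set u v).
  by split; [exists l0 | exact: delta_set_has_lbound].
have [e [e_gt0 e_cond]] := inf_adherent l_gt0 delta_inf.
by rewrite -/(delta u v) delta0 add0r => /ltW e_le_l; exact: delta_cond_mono e_le_l e_cond.
Qed.

Lemma delta_cond_all_le u v x0 : Conv_coe u -> Conv_coe v ->
  (forall l, 0 < l -> delta_cond u v l) -> (u x0 <= v x0)%E.
Proof.
move=> [u_proper [u_lsc [u_cvx _]]] [[v_gtNy _] _] cond.
rewrite leNgt; apply/negP; case vx0: (v x0) => [b| |]; last 2 first.
- by rewrite ltNge leey.
- by move: (v_gtNy x0); rewrite vx0.
move=> /EFin_lt_dense[t b_lt_t /(lsc_convex_affine_minorant u_proper u_lsc u_cvx)].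
move=> [y [r [u_conj t_lt]]].
set gap := dotv x0 y - r - t.
have gap_gt0 : 0 < gap by rewrite /gap; lra.
pose l := (enorm y + 1 + gap^-1)^-1.
have y_ge0 := enorm_ge0 y; have gapV_gt0 : 0 < gap^-1 by rewrite invr_gt0.
have l_gt0 : 0 < l by rewrite invr_gt0; lra.
have y_le : enorm y <= l^-1 by rewrite invrK; lra.
have l_le_gap : l <= gap by rewrite -[gap]invrK lef_pV2 ?posrE ?invr_gt0 //; lra.
have [_ v_conj] := cond l l_gt0 y y_le.
have := le_trans (le_conj_fun v x0 y) (le_trans v_conj (leeD2r l%:E u_conj)).
by rewrite vx0 -EFinB -EFinD lee_fin; move: l_le_gap; rewrite /gap; lra.
Qed.

Lemma delta_eq0 u v : Conv_coe u -> Conv_coe v -> delta u v = 0 <-> u = v.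
Proof.
move=> u_coe v_coe; split => [delta0|<-].
  have cond := delta_eq0_delta_cond u_coe v_coe delta0.
  apply/funext => x; apply/le_anti; rewrite delta_cond_all_le //=.
  by apply: delta_cond_all_le => // l /cond; exact: delta_condC.
apply/le_anti; rewrite delta_ge0 // andbT; apply/ler_addgt0Pr => e e_gt0.
rewrite add0r; apply: ge_inf; first exact: delta_set_has_lbound.
by split; last exact: delta_condxx (ltW e_gt0).
Qed.

Lemma deltaC u v : delta u v = delta v u.
Proof.
by rewrite /delta; congr inf; apply/seteqP; split => l [l_gt0 /delta_condC].
Qed.

Lemma delta_triangle u v w : Conv_coe u -> Conv_coe v -> Conv_coe w ->
  delta u w <= delta u v + delta v w.
Proof.
move=> u_coe v_coe w_coe; rewrite -[delta u v]mul1r -[delta v w]mul1r.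
have [a a_cond] := exists_delta_cond u_coe v_coe.
have [b b_cond] := exists_delta_cond v_coe w_coe.
apply: lb_le_inf_comb; [by exists a | by exists b | by [] | by [] |].
move=> a' b' [a'_gt0 uv] [b'_gt0 vw]; rewrite !mul1r.
apply: ge_inf; first exact: delta_set_has_lbound.
by split; [exact: addr_gt0 | exact: delta_condD a'_gt0 b'_gt0 uv vw].
Qed.

Lemma conj_fun_transl u x0 (t0 : R) y : proper_fun u ->
  conj_fun (transl u x0 t0) y = (conj_fun u y + (dotv x0 y - t0)%:E)%E.
Proof.
move=> [u_gtNy _]; apply/le_anti/andP; split.
  apply: ge_ereal_sup => _ [x _ <-]; rewrite /transl.
  case ux: (u (x - x0)) => [b| |]; [|by rewrite leNye|by move: (u_gtNy (x - x0)); rewrite ux].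
  apply: le_trans (leeD2r _ (le_conj_fun u (x - x0) y)).
  by rewrite ux -EFinD -!EFinB -EFinD lee_fin dotvBl; lra.
rewrite -leeBrDr // -EFinN.
apply: ge_ereal_sup => _ [z _ <-].
case uz: (u z) => [b| |]; [|by rewrite leNye|by move: (u_gtNy z); rewrite uz].
apply: le_trans (leeD2r _ (le_conj_fun (transl u x0 t0) (z + x0) y)).
by rewrite /transl addrK uz -EFinD -!EFinB lee_fin dotvDl; lra.
Qed.

Lemma delta_transl u v x0 (t0 : R) : Conv_coe u -> Conv_coe v ->
  delta u v = delta (transl u x0 t0) (transl v x0 t0).
Proof.
move=> [u_proper _] [v_proper _]; rewrite /delta; congr inf.
apply/seteqP; split => l [l_gt0 cond]; split => // y /cond.
all: by rewrite !conj_fun_transl // -!addeA ![((_ - t0)%:E + _)%E]addeC !addeA !leeD2rE.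
Qed.

End Delta.

Theorem lemma5p11 (R : realType) (n : nat) :
  (* finiteness: the defining set of delta is nonempty *)
  (forall u v : 'rV[R]_n -> \bar R, Conv_coe u -> Conv_coe v ->
     exists l : R, 0 < l /\ delta_cond u v l) /\
  (* nonnegativity *)
  (forall u v : 'rV[R]_n -> \bar R, Conv_coe u -> Conv_coe v ->
     0 <= delta u v) /\
  (* identity of indiscernibles *)
  (forall u v : 'rV[R]_n -> \bar R, Conv_coe u -> Conv_coe v ->
     (delta u v = 0 <-> u = v)) /\
  (* symmetry *)
  (forall u v : 'rV[R]_n -> \bar R, Conv_coe u -> Conv_coe v ->
     delta u v = delta v u) /\
  (* triangle inequality *)
  (forall u v w : 'rV[R]_n -> \bar R, Conv_coe u -> Conv_coe v -> Conv_coe w ->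
     delta u w <= delta u v + delta v w) /\
  (* invariance under translations and vertical shifts *)
  (forall (u v : 'rV[R]_n -> \bar R) (x0 : 'rV[R]_n) (t0 : R),
     Conv_coe u -> Conv_coe v ->
     delta u v = delta (transl u x0 t0) (transl v x0 t0)).
Proof.
split; first exact: exists_delta_cond.
split; first exact: delta_ge0.
split; first exact: delta_eq0.
split; first by move=> u v _ _; exact: deltaC.
split; first exact: delta_triangle.
exact: delta_transl.
Qed.
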